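(* In the cone setting of the context, for any $h\in\mathcal C_{\mathbb C}$ and all $\ell\in\mathcal C'_{\mathbb C}$, \[|\ell(h)|\ge e^{-\delta_{\mathcal C}(h,e)}\frac{\kappa}{\sqrt2}\|h\|\,|\ell(e)|.\]
   Context: Cone setting. $V$ is a real topological vector space, $\mathcal S\subset V'$ a set of linear functionals such that $\ell(x)=0$ for all $\ell\in\mathcal S$ implies $x=0$, $C_{\mathbb R}=\{h\in V\setminus\{0\}:\ell(h)\ge0\ \forall\ell\in\mathcal S\}$, and $e\in C_{\mathbb R}$ is such that for every $h\in V$ some $\lambda\ge0$ has $\lambda e-h\in C_{\mathbb R}$. Norm $\|h\|=\inf\{\lambda\ge0:\ell(\lambda e\pm h)\ge0\ \forall\ell\in\mathcal S\}$; $\mathcal B_{\mathbb R}$ the completion of $V$; $\mathcal C_{\mathbb R}=\{h\in\mathcal B_{\mathbb R}\setminus\{0\}:\ell(h)\ge0\ \forall\ell\in\mathcal S\}$. $\mathcal S_*$ is the weak-$*$ closure of the convex hull of $\{\lambda\ell:\lambda>0,\ell\in\mathcal S\}$; there exist $m\in\mathcal S_*$, $\kappa\in(0,1)$ with $m(e)=1$ and $m(h)\ge\kappa\|h\|$ on $\mathcal C_{\mathbb R}$. $\mathcal B_{\mathbb C}$ is the complexification (norm $\|x+iy\|=\sup_\theta(\|\Re(e^{i\theta}(x+iy))\|^2+\|\Im(e^{i\theta}(x+iy))\|^2)^{1/2}$), real functionals extended complex-linearly. $\mathcal C_{\mathbb C}=\{z(x+iy):z\ne0,x,y\in\mathcal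 C_{\mathbb R}\}$, $\mathcal C'_{\mathbb C}=\{\ell\in\mathcal B'_{\mathbb C}:\ell(h)\ne0\ \forall h\in\mathcal C_{\mathbb C}\}$. For $h,g\in\mathcal C_{\mathbb C}$, $E(h,g)=\{\ell(h)/\ell(g):\ell\in\mathcal C'_{\mathbb C}\}$ and $\delta_{\mathcal C}(h,g)=\ln\frac{\sup_{z\in E(h,g)}|z|}{\inf_{z\in E(h,g)}|z|}$. *)

From HB Require Import structures.
From mathcomp Require Import all_boot all_order all_algebra.
From mathcomp Require Import all_classical all_reals all_analysis.
From mathcomp Require Import complex.
Set Implicit Arguments. Unset Strict Implicit. Unset Printing Implicit Defensive.
Import Order.TTheory GRing.Theory Num.Theory.
Import numFieldNormedType.Exports.
Local Open Scope classical_set_scope.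
Local Open Scope ring_scope.

Section ConeDefs.
Context {R : realType} {V : topologicalLmodType R} {B : completeNormedModType R}.

Definition linR {U : lmodType R} (f : U -> R) :=
  forall (a : R) x y, f (a *: x + y) = a * f x + f y.

Definition dualV (l : V -> R) := linR l /\ continuous l.

(* The extensions to the completion B_R of the functionals in S:
   continuous linear f on B_R whose restriction to V (via the embedding j)
   lies in S. *)
Definition Sext (S : set (V -> R)) (j : V -> B) : set (B -> R) :=
  [set f | linR f /\ continuous f /\ S (f \o j)].

Definition coneV (S : set (V -> R)) (h : V) :=
  h <> 0 /\ forall l, S l -> 0 <= l h.

Definition ounorm (S : set (V -> R)) (e h : V) : R :=
  inf [set lam : R | 0 <= lam /\
        forall l, S l -> 0 <= l (lam *: e + h) /\ 0 <= l (lam *: e - h)].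

Definition coneR (S : set (V -> R)) (j : V -> B) (h : B) :=
  h <> 0 /\ forall f, Sext S j f -> 0 <= f h.

(* m belongs to S_* : the weak-* closure (in V') of the convex hull of
   { lam * l : lam > 0, l in S }.  Weak-* neighbourhoods: finitely many
   test points and a tolerance eps. *)
Definition inSstar (S : set (V -> R)) (m : V -> R) :=
  dualV m /\
  forall (xs : seq V) (eps : R), 0 < eps ->
    exists n (t lam : 'I_n.+1 -> R) (ls : 'I_n.+1 -> V -> R),
      (forall i, 0 <= t i) /\ \sum_(i < n.+1) t i = 1 /\
      (forall i, 0 < lam i /\ S (ls i)) /\
      forall x, x \in xs ->
        `| m x - \sum_(i < n.+1) t i * (lam i * ls i x) | < eps.

(* Complexification B_C = B_R x B_R, the pair (x, y) standing for x + iy. *)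
Definition scaleC (z : R[i]) (w : B * B) : B * B :=
  (complex.Re z *: w.1 - complex.Im z *: w.2, complex.Im z *: w.1 + complex.Re z *: w.2).

Definition addC (w w' : B * B) : B * B := (w.1 + w'.1, w.2 + w'.2).
Definition subC (w w' : B * B) : B * B := (w.1 - w'.1, w.2 - w'.2).

Definition normBC (w : B * B) : R :=
  sup [set r : R | exists theta : R,
        r = Num.sqrt (`| cos theta *: w.1 - sin theta *: w.2 | ^+ 2
                     + `| sin theta *: w.1 + cos theta *: w.2 | ^+ 2)].

Definition linC (L : B * B -> R[i]) :=
  forall (z : R[i]) w w', L (addC (scaleC z w) w') = z * L w + L w'.

Definition contC (L : B * B -> R[i]) :=
  forall w (eps : R), 0 < eps -> exists2 d : R, 0 < d &
    forall w', normBC (subC w' w) < d -> Normc.normc (L w' - L w) < eps.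

Definition dualC (L : B * B -> R[i]) := linC L /\ contC L.

Definition coneC (S : set (V -> R)) (j : V -> B) (w : B * B) :=
  exists (z : R[i]) (x y : B),
    z <> 0 /\ coneR S j x /\ coneR S j y /\ w = scaleC z (x, y).

Definition dualC' (S : set (V -> R)) (j : V -> B) (L : B * B -> R[i]) :=
  dualC L /\ forall w, coneC S j w -> L w <> 0.

Definition Eset (S : set (V -> R)) (j : V -> B) (h g : B * B) : set R[i] :=
  [set L h / L g | L in dualC' S j].

Definition deltaC (S : set (V -> R)) (j : V -> B) (h g : B * B) : \bar R :=
  let A := [set (Normc.normc z)%:E | z in Eset S j h g] in
  let s := ereal_sup A in
  let i := ereal_inf A in
  if ((0 < i)%E && (s < +oo)%E) then (ln (fine s / fine i))%:E else +oo%E.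

End ConeDefs.

From Pilot Require Import Defs.
From HB Require Import structures.
From mathcomp Require Import all_boot all_order all_algebra.
From mathcomp Require Import all_classical all_reals all_analysis.
From mathcomp Require Import complex.
From mathcomp Require Import ring lra.
Set Implicit Arguments. Unset Strict Implicit. Unset Printing Implicit Defensive.
Import Order.TTheory GRing.Theory Num.Theory.
Import numFieldNormedType.Exports.
Local Open Scope classical_set_scope.
Local Open Scope ring_scope.

(* The complexification [M (x, y) = m x + i m y] of the extended functional [m] is
   complex linear and continuous, and it does not vanish on the complex cone, since
   [Re M (x, y) = m x > 0] there; so [M] lies in [C'_C], with [M e = 1]. Comparing
   [M] with any [L] in the definition of [delta] gives
   [exp (- delta (h, e)) |M h| |L e| <= |L h|]. Finally, for [h = z (x + iy)],
   [|M h| = |z| (m(x)^2 + m(y)^2)^(1/2) >= kappa |z| (|x|^2 + |y|^2)^(1/2)], and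
   this dominates [kappa / sqrt 2 ||h||] because, by Cauchy-Schwarz, each rotation
   [e^(i theta) h] has real and imaginary parts of squared norms at most
   [|z|^2 (|x|^2 + |y|^2)]. *)

Section RealLinear.
Variables (R : realType) (U : lmodType R) (f : U -> R).
Hypothesis linf : linR f.

Lemma linR0 : f 0 = 0.
Proof.
have := linf 1 0 0; rewrite scaler0 addr0 mul1r => /(congr1 (+%R^~ (- f 0))).
by rewrite subrr addrK.
Qed.

Lemma linRZ a x : f (a *: x) = a * f x.
Proof. by have := linf a x 0; rewrite !addr0 linR0 addr0. Qed.

Lemma linRD x y : f (x + y) = f x + f y.
Proof. by have := linf 1 x y; rewrite scale1r mul1r. Qed.

Lemma linRB x y : f (x - y) = f x - f y.
Proof. by have := linf (-1) y x; rewrite scaleN1r mulN1r addrC [_ + f x]addrC. Qed.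

End RealLinear.

Section PairNorm.
Context {R : realType} {N : normedModType R}.

Lemma normDZ_sqr_le (a b : R) (u v : N) :
  `|a *: u + b *: v| ^+ 2 <= (a ^+ 2 + b ^+ 2) * (`|u| ^+ 2 + `|v| ^+ 2).
Proof.
have triangle : `|a *: u + b *: v| <= `|a| * `|u| + `|b| * `|v|.
  by rewrite -!normrZ ler_normD.
apply: (@le_trans _ _ ((`|a| * `|u| + `|b| * `|v|) ^+ 2)).
  by rewrite ler_sqr ?nnegrE ?addr_ge0 ?mulr_ge0.
rewrite -(real_normK (num_real a)) -(real_normK (num_real b)) -subr_ge0.
have -> : (`|a| ^+ 2 + `|b| ^+ 2) * (`|u| ^+ 2 + `|v| ^+ 2)
          - (`|a| * `|u| + `|b| * `|v|) ^+ 2 = (`|a| * `|v| - `|b| * `|u|) ^+ 2.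
  by ring.
exact: sqr_ge0.
Qed.

Definition pairnorm (w : N * N) : R := Num.sqrt (`|w.1| ^+ 2 + `|w.2| ^+ 2).

Lemma normr_fst_le_pairnorm w : `|w.1| <= pairnorm w.
Proof.
by rewrite -[leLHS]normr_id -sqrtr_sqr; apply: ler_wsqrtr; rewrite lerDl sqr_ge0.
Qed.

Lemma normr_snd_le_pairnorm w : `|w.2| <= pairnorm w.
Proof.
by rewrite -[leLHS]normr_id -sqrtr_sqr; apply: ler_wsqrtr; rewrite lerDr sqr_ge0.
Qed.

End PairNorm.

Lemma normc_ge0 (R : rcfType) (z : R[i]) : 0 <= Normc.normc z.
Proof. by case: z => a b; apply: sqrtr_ge0. Qed.

Lemma normc_le_normr_add (R : rcfType) (a b : R) :
  Normc.normc (a +i* b)%C <= `|a| + `|b|.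
Proof.
rewrite -[leRHS]ger0_norm ?addr_ge0 // -(sqrtr_sqr (`|a| + `|b|)).
apply: ler_wsqrtr.
rewrite -(real_normK (num_real a)) -(real_normK (num_real b)) sqrrD -addrA.
by rewrite lerD2l lerDr mulrn_wge0 ?mulr_ge0.
Qed.

Section Complexification.
Context {R : realType} {B : completeNormedModType R}.

Lemma scaler_lincomb2 (c d p q p' q' : R) (u v : B) :
  c *: (p *: u + q *: v) + d *: (p' *: u + q' *: v) =
  (c * p + d * p') *: u + (c * q + d * q') *: v.
Proof. by rewrite !scalerDr !scalerA !scalerDl addrACA. Qed.

Lemma scaleCM (z z' : R[i]) (w : B * B) :
  scaleC (z * z') w = scaleC z (scaleC z' w).
Proof.
case: z z' w => [a b] [c d] [x y].
rewrite /scaleC /= -!(@scaleNr _ B) !scaler_lincomb2.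
by congr pair; congr (_ + _); congr (_ *: _); ring.
Qed.

Lemma scale1C (w : B * B) : scaleC 1 w = w.
Proof. by case: w => x y; rewrite /scaleC /= !scale1r !scale0r subr0 add0r. Qed.

Lemma pairnorm_scaleC_le z (w : B * B) :
  pairnorm (scaleC z w) <= Num.sqrt 2 * Normc.normc z * pairnorm w.
Proof.
case: z => a b; rewrite /pairnorm /= -!sqrtrM ?mulr_ge0 ?addr_ge0 ?sqr_ge0 //.
apply: ler_wsqrtr.
have := normDZ_sqr_le a (- b) w.1 w.2; have := normDZ_sqr_le b a w.1 w.2.
rewrite scaleNr sqrrN addrC; lra.
Qed.

Definition rotC (t : R) : R[i] := (cos t +i* sin t)%C.

Lemma normc_rotC t : Normc.normc (rotC t) = 1.
Proof. by rewrite /Normc.normc /= cos2Dsin2 sqrtr1. Qed.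

Lemma normBCE (w : B * B) :
  normBC w = sup [set r | exists t, r = pairnorm (scaleC (rotC t) w)].
Proof. by []. Qed.

Lemma normBC_has_ubound (w : B * B) :
  has_ubound [set r | exists t, r = pairnorm (scaleC (rotC t) w)].
Proof.
exists (Num.sqrt 2 * pairnorm w) => _ [t ->].
by have := pairnorm_scaleC_le (rotC t) w; rewrite normc_rotC mulr1.
Qed.

Lemma pairnorm_le_normBC (w : B * B) : pairnorm w <= normBC w.
Proof.
rewrite normBCE; apply: (ub_le_sup (normBC_has_ubound w)).
by exists 0; rewrite /rotC cos0 sin0 scale1C.
Qed.

Lemma normBC_scaleC_le z (w : B * B) :
  normBC (scaleC z w) <= Num.sqrt 2 * Normc.normc z * pairnorm w.
Proof.
rewrite normBCE; apply: ge_sup; first by eexists; exists 0.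
move=> _ [t ->]; rewrite -scaleCM; apply: le_trans (pairnorm_scaleC_le _ _) _.
by rewrite Normc.normcM normc_rotC mul1r.
Qed.

Definition complexify (f : B -> R) (w : B * B) : R[i] := (f w.1 +i* f w.2)%C.

Variables (f : B -> R).
Hypothesis linf : linR f.

Lemma complexify_scaleC z w : complexify f (scaleC z w) = z * complexify f w.
Proof.
case: z => a b; rewrite /complexify /= !(linRB linf) !(linRD linf) !(linRZ linf).
by congr Complex; ring.
Qed.

Lemma complexifyD (w w' : B * B) :
  complexify f (Defs.addC w w') = complexify f w + complexify f w'.
Proof. by rewrite /complexify /= !(linRD linf). Qed.

Lemma complexifyB w w' :
  complexify f (subC w w') = complexify f w - complexify f w'.
Proof. by rewrite /complexify /= !(linRB linf). Qed.

Lemma complexify_linC : linC (complexify f).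
Proof. by move=> z w w'; rewrite complexifyD complexify_scaleC. Qed.

Lemma complexify_contC : continuous f -> contC (complexify f).
Proof.
move=> fcont w eps eps0.
have [d d0 f_small] : exists2 d, 0 < d & forall v, `|v| < d -> `|f v| < eps / 2.
  have near0 := (cvgrPdist_lt _ _).1 (fcont 0) _ (divr_gt0 eps0 (ltr0n _ 2)).
  have [d d0 Hd] := (@nbhs_norm0P _ B _).1 (near0 _).
  exists d => // v /Hd /=.
  by rewrite (linR0 linf) sub0r normrN.
exists d => // w' w'w; rewrite -complexifyB.
apply: le_lt_trans (normc_le_normr_add _ _) _.
have part u : `|u| <= pairnorm (subC w' w) -> `|f u| < eps / 2.
  move=> u_le; apply/f_small/(le_lt_trans u_le).
  exact: le_lt_trans (pairnorm_le_normBC _) w'w.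
have := part _ (normr_fst_le_pairnorm _); have := part _ (normr_snd_le_pairnorm _).
lra.
Qed.

Variables (V : topologicalLmodType R) (S : set (V -> R)) (j : V -> B).

Lemma complexify_coneC_neq0 : (forall x, coneR S j x -> 0 < f x) ->
  forall w, coneC S j w -> complexify f w <> 0.
Proof.
move=> fpos _ [z [x [y [z0 [xC [_ ->]]]]]].
rewrite complexify_scaleC; apply/eqP; rewrite mulf_neq0 //; first exact/eqP.
by apply/eqP => /(congr1 (@complex.Re R)) /=; apply/eqP; rewrite gt_eqF // fpos.
Qed.

Lemma complexify_dualC' : continuous f -> (forall x, coneR S j x -> 0 < f x) ->
  dualC' S j (complexify f).
Proof.
move=> fcont fpos; split; last exact: complexify_coneC_neq0.
by split; [exact: complexify_linC | exact: complexify_contC].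
Qed.

Lemma normBC_le_complexify (kappa : R) : 0 <= kappa ->
    (forall x, coneR S j x -> kappa * `|x| <= f x) ->
  forall w, coneC S j w ->
  kappa / Num.sqrt 2 * normBC w <= Normc.normc (complexify f w).
Proof.
move=> kappa0 fge _ [z [x [y [_ [xC [yC ->]]]]]].
rewrite complexify_scaleC Normc.normcM.
have sqrt2_gt0 : 0 < Num.sqrt 2 :> R by rewrite sqrtr_gt0.
set bound := Num.sqrt 2 * Normc.normc z * pairnorm (x, y).
apply: (@le_trans _ _ (kappa / Num.sqrt 2 * bound)).
  by rewrite ler_wpM2l ?divr_ge0 ?sqrtr_ge0 ?normBC_scaleC_le.
have -> : kappa / Num.sqrt 2 * bound = Normc.normc z * (kappa * pairnorm (x, y)).
  by rewrite /bound; field; rewrite gt_eqF.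
rewrite ler_wpM2l ?normc_ge0 // /pairnorm /complexify /Normc.normc /=.
rewrite -[kappa in leLHS]ger0_norm // -sqrtr_sqr -sqrtrM ?sqr_ge0 //.
apply: ler_wsqrtr; rewrite mulrDr -!exprMn.
have sqr_le u : coneR S j u -> (kappa * `|u|) ^+ 2 <= f u ^+ 2.
  by move=> uC; rewrite ler_sqr ?nnegrE ?fge ?(le_trans _ (fge _ uC)) ?mulr_ge0.
by rewrite lerD ?sqr_le.
Qed.

End Complexification.

Section DeltaC.
Context {R : realType} {V : topologicalLmodType R} {B : completeNormedModType R}.
Variables (S : set (V -> R)) (j : V -> B).

Lemma expeRN_deltaC_le (L M : B * B -> R[i]) (h g : B * B) :
  dualC' S j L -> dualC' S j M ->
  (expeR (- deltaC S j h g) * (Normc.normc (M h) * Normc.normc (L g))%:E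
    <= (Normc.normc (L h) * Normc.normc (M g))%:E)%E.
Proof.
move=> LC MC; rewrite /deltaC; set A := [set _ | _ in _].
have ratio_in N : dualC' S j N ->
    (ereal_inf A <= (Normc.normc (N h) / Normc.normc (N g))%:E
     <= ereal_sup A)%E.
  move=> NC; rewrite -Normc.normcV -Normc.normcM.
  by rewrite ereal_inf_lbound ?ereal_sup_ubound //; exists (N h / N g) => //; exists N.
case: ifP => [/andP [inf_gt0 sup_fin] | _]; last first.
  by rewrite /= mul0e lee_fin mulr_ge0 ?normc_ge0.
move: inf_gt0 sup_fin (ratio_in L LC) (ratio_in M MC).
case: (ereal_inf A) => [i| |]; case: (ereal_sup A) => [s| |] //=;
  rewrite ?lte_fin ?lee_fin ?ltxx ?leey ?leNye ?andbF //= => i0 _.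
set Lh := Normc.normc (L h); set Lg := Normc.normc (L g).
set Mh := Normc.normc (M h); set Mg := Normc.normc (M g).
move=> /andP [iL _] /andP [iM Ms].
(* As [x / 0 = 0], a positive lower bound on the ratios rules out zero
   denominators. *)
have denom_gt0 x y : 0 <= y -> i <= x / y -> 0 < y.
  rewrite le_eqVlt => /predU1P [<- | //].
  by rewrite invr0 mulr0 => /(lt_le_trans i0); rewrite ltxx.
have Lg0 : 0 < Lg := denom_gt0 _ _ (normc_ge0 _) iL.
have Mg0 : 0 < Mg := denom_gt0 _ _ (normc_ge0 _) iM.
have s0 : 0 < s := lt_le_trans i0 (le_trans iM Ms).
rewrite expRN lnK ?posrE ?divr_gt0 // invf_div mulrAC ler_pdivrMr //.
move: iL Ms; rewrite ler_pdivlMr // ler_pdivrMr // => iL Ms.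
apply: (@le_trans _ _ (i * (s * Mg * Lg))).
  by rewrite ler_pM2l // ler_pM2r.
have -> : i * (s * Mg * Lg) = i * Lg * Mg * s by ring.
by rewrite ler_pM2r // ler_pM2r.
Qed.

End DeltaC.

Theorem lemma5p14 (R : realType) (V : topologicalLmodType R)
  (S : set (V -> R)) (e : V)
  (B : completeNormedModType R) (j : V -> B)
  (m : V -> R) (mext : B -> R) (kappa : R)
  (* S is a set of continuous linear functionals on V *)
  (HS : forall l, S l -> dualV l)
  (* S separates points of V *)
  (Hsep : forall x, (forall l, S l -> l x = 0) -> x = 0)
  (* e lies in C_R and is an order unit *)
  (He : coneV S e)
  (Hunit : forall h, exists lam : R, 0 <= lam /\ coneV S (lam *: e - h))
  (* B is the completion of (V, ||.||): j is a linear isometric embedding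
     with dense range into the Banach space B *)
  (Hjlin : forall (a : R) x y, j (a *: x + y) = a *: j x + j y)
  (Hjnorm : forall h, `| j h | = ounorm S e h)
  (Hjdense : closure (range j) = setT)
  (* m in S_*, m(e) = 1, m(h) >= kappa ||h|| on \mathcal C_R *)
  (HmS : inSstar S m)
  (Hmext_lin : linR mext) (Hmext_cont : continuous mext)
  (Hmext : mext \o j = m)
  (Hme : m e = 1)
  (Hkappa : 0 < kappa < 1)
  (Hmcone : forall h, coneR S j h -> kappa * `| h | <= mext h) :
  forall h : B * B, coneC S j h ->
  forall L : B * B -> R[i], dualC' S j L ->
    (expeR (- deltaC S j h (j e, 0%R : B))
       * ((kappa / Num.sqrt 2) * normBC h * Normc.normc (L (j e, 0%R : B)))%:E
     <= (Normc.normc (L h))%:E)%E.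
Proof.
move=> h hC L LC.
have kappa0 : 0 < kappa by case/andP: Hkappa.
have mext_pos x : coneR S j x -> 0 < mext x.
  move=> xC; apply: lt_le_trans (Hmcone x xC).
  by rewrite mulr_gt0 // normr_gt0; apply/eqP; case: xC.
have MC := complexify_dualC' Hmext_lin Hmext_cont mext_pos.
have Me : complexify mext (j e, 0) = 1.
  have mext_e : mext (j e) = 1 by rewrite -Hme -Hmext.
  by rewrite /complexify /= mext_e (linR0 Hmext_lin).
have Mh := normBC_le_complexify Hmext_lin (ltW kappa0) Hmcone hC.
have := expeRN_deltaC_le h (j e, 0) LC MC; rewrite Me Normc.normc1 mulr1.
apply: le_trans.
by apply: lee_wpmul2l; rewrite ?expeR_ge0 // lee_fin ler_wpM2r ?normc_ge0.
Qed.
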